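(* Let $(g(m))_{m\ge1}$ be a sequence of complex numbers such that the series $\sum_{m\ge1}g(m)/m$ and $\sum_{m\ge1}g(m)(\log m)/m$ both converge. Define $G^\sharp(x)=\sum_{m>x}g(m)/m$ for real $x>0$ and assume that $\int_1^\infty|G^\sharp(t)|\,dt/t$ converges. Then for every real $D\ge1$, \[ \sum_{n\le D}\frac{(g\star\mathbf 1)(n)}{n}=\sum_{m\ge1}\frac{g(m)}{m}\Bigl(\log\frac{D}{m}+\gamma\Bigr)+\int_{e^\gamma D}^\infty G^\sharp(t)\frac{dt}{t}+E, \] where \[ |E|\le \frac1D\int_1^{e^\gamma}\sum_{m\le uD}|g(m)|\,\frac{du}{u}. \]
   Context: $\gamma$ is Euler's constant. $(g\star\mathbf 1)(n)=\sum_{m\mid n}g(m)$ is the Dirichlet convolution of $g$ with the constant function $1$. *)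

From Stdlib Require Import Reals List Arith ZArith.
From Coquelicot Require Import Coquelicot.
Import ListNotations.

Open Scope R_scope.

Definition harmonic (N : nat) : R := sum_f_R0 (fun k => / INR (S k)) (pred N).
Definition euler_gamma : R := real (Lim_seq (fun N => harmonic N - ln (INR N))).

Definition sumC_le (f : nat -> C) (x : R) : C :=
  fold_right Cplus (RtoC 0)
    (map f (filter (fun n => if Rle_dec (INR n) x then true else false)
                   (seq 1 (Z.to_nat (up x))))).

Definition sumR_le (f : nat -> R) (x : R) : R :=
  fold_right Rplus 0
    (map f (filter (fun n => if Rle_dec (INR n) x then true else false)
                   (seq 1 (Z.to_nat (up x))))).

Definition conv1 (g : nat -> C) (n : nat) : C :=
  fold_right Cplus (RtoC 0)
    (map g (filter (fun m => Nat.eqb (n mod m) 0) (seq 1 n))).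

(* Sum of a complex series, taken componentwise (a complex series converges
   iff its real and imaginary parts do, with sum = sum of parts). *)
Definition SeriesC (a : nat -> C) : C :=
  (Series (fun k => Re (a k)), Series (fun k => Im (a k))).

Definition Gsharp (g : nat -> C) (x : R) : C :=
  SeriesC (fun k : nat => if Rlt_dec x (INR (S k))
                         then ((g (S k) / RtoC (INR (S k)))%C : C) else (RtoC 0 : C)).

From Stdlib Require Import Reals List Arith ZArith Lra Lia Psatz.
From Coquelicot Require Import Coquelicot.
Open Scope R_scope.

(** Put alpha(m) = g(m)/m, S = sum alpha(m), L = sum alpha(m) ln m,
    H(y) = sum_{k <= y} 1/k and X = e^gamma D.  The argument has four parts.
    - Euler's constant: c_n = H_n - ln n decreases to gamma with
      1/(2n+1) <= c_n - gamma <= 1/(2n), whence |H(y) - ln y - gamma| <= gamma/y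
      for y >= 1 ([harm_estimate]).
    - Exchanging summations: sum_{n <= D} (g * 1)(n)/n = sum_m alpha(m) H(D/m)
      ([divisor_sum_swap]).
    - The integral: G#(t) = S - sum_{m <= t} alpha(m), so int_X^b G#(t) dt/t is
      explicit; Abel summation against ln m (using only the convergence of L)
      shows it converges to L - S ln X + sum_{m <= X} alpha(m) ln(X/m)
      ([Gsharp_integral]).
    Complex series and integrals are handled through their real and imaginary
    parts, matching the coordinatewise definition of [Gsharp]. *)

(** [psumR f n] and [psumC f n] are f 1 + ... + f n.  The plain recursive
    definition keeps [ring] and [field] directly applicable to summands. *)

Fixpoint psumR (f : nat -> R) (n : nat) : R :=
  match n with O => 0 | S p => psumR f p + f (S p) end.
Fixpoint psumC (f : nat -> C) (n : nat) : C :=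
  match n with O => RtoC 0 | S p => Cplus (psumC f p) (f (S p)) end.

Lemma psumR_ext (f h : nat -> R) (n : nat) :
  (forall k, (1 <= k <= n)%nat -> f k = h k) -> psumR f n = psumR h n.
Proof.
  induction n as [|n IH]; intros H; cbn [psumR]; [reflexivity|].
  rewrite IH by (intros; apply H; lia). rewrite H by lia. reflexivity.
Qed.

Lemma psumC_ext (f h : nat -> C) (n : nat) :
  (forall k, (1 <= k <= n)%nat -> f k = h k) -> psumC f n = psumC h n.
Proof.
  induction n as [|n IH]; intros H; cbn [psumC]; [reflexivity|].
  rewrite IH by (intros; apply H; lia). rewrite H by lia. reflexivity.
Qed.

Lemma psumR_plus (f h : nat -> R) (n : nat) :
  psumR (fun k => f k + h k) n = psumR f n + psumR h n.
Proof. induction n; cbn [psumR]; [ring | rewrite IHn; ring]. Qed.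

Lemma psumC_plus (f h : nat -> C) (n : nat) :
  psumC (fun k => f k + h k)%C n = (psumC f n + psumC h n)%C.
Proof. induction n; cbn [psumC]; [ring | rewrite IHn; ring]. Qed.

Lemma psumR_scal (c : R) (f : nat -> R) (n : nat) :
  psumR (fun k => c * f k) n = c * psumR f n.
Proof. induction n; cbn [psumR]; [ring | rewrite IHn; ring]. Qed.

Lemma psumC_scal (c : C) (f : nat -> C) (n : nat) :
  psumC (fun k => c * f k)%C n = (c * psumC f n)%C.
Proof. induction n; cbn [psumC]; [ring | rewrite IHn; ring]. Qed.

Lemma psumR_zero (n : nat) : psumR (fun _ => 0) n = 0.
Proof. induction n; cbn [psumR]; [ring | rewrite IHn; ring]. Qed.

Lemma psumC_zero (n : nat) : psumC (fun _ => RtoC 0) n = RtoC 0.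
Proof. induction n; cbn [psumC]; [ring | rewrite IHn; ring]. Qed.

Lemma psumR_switch (f : nat -> nat -> R) (K1 K2 : nat) :
  psumR (fun i => psumR (fun j => f i j) K2) K1 =
  psumR (fun j => psumR (fun i => f i j) K1) K2.
Proof.
  induction K1; cbn [psumR]; [symmetry; apply psumR_zero|].
  rewrite IHK1, <- psumR_plus. reflexivity.
Qed.

Lemma psumC_switch (f : nat -> nat -> C) (K1 K2 : nat) :
  psumC (fun i => psumC (fun j => f i j) K2) K1 =
  psumC (fun j => psumC (fun i => f i j) K1) K2.
Proof.
  induction K1; cbn [psumC]; [symmetry; apply psumC_zero|].
  rewrite IHK1, <- psumC_plus. reflexivity.
Qed.

Lemma RtoC_psumR (f : nat -> R) (n : nat) :
  RtoC (psumR f n) = psumC (fun k => RtoC (f k)) n.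
Proof.
  induction n; cbn [psumR psumC]; [reflexivity|].
  rewrite <- IHn, RtoC_plus. reflexivity.
Qed.

Lemma Re_psumC (f : nat -> C) (n : nat) : Re (psumC f n) = psumR (fun k => Re (f k)) n.
Proof. induction n; cbn [psumC psumR]; [reflexivity|]. rewrite re_plus, IHn. reflexivity. Qed.

Lemma Im_psumC (f : nat -> C) (n : nat) : Im (psumC f n) = psumR (fun k => Im (f k)) n.
Proof. induction n; cbn [psumC psumR]; [reflexivity|]. rewrite <- IHn. reflexivity. Qed.

Lemma Cmod_psumC_le (f : nat -> C) (n : nat) :
  Cmod (psumC f n) <= psumR (fun k => Cmod (f k)) n.
Proof.
  induction n; cbn [psumR psumC]; [rewrite Cmod_0; lra|].
  eapply Rle_trans; [apply Cmod_triangle | lra].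
Qed.

Lemma psumR_le (f h : nat -> R) (n : nat) :
  (forall k, (1 <= k <= n)%nat -> f k <= h k) -> psumR f n <= psumR h n.
Proof.
  induction n; intros H; cbn [psumR]; [lra|].
  apply Rplus_le_compat; [apply IHn; intros; apply H | apply H]; lia.
Qed.

Lemma psumR_pad (f : nat -> R) (n p : nat) :
  (forall k, (n < k <= n + p)%nat -> f k = 0) -> psumR f (n + p) = psumR f n.
Proof.
  induction p; intros H; [rewrite Nat.add_0_r; reflexivity|].
  rewrite Nat.add_succ_r. cbn [psumR].
  rewrite IHp by (intros; apply H; lia). rewrite H by lia. ring.
Qed.

Lemma psumC_pad (f : nat -> C) (n p : nat) :
  (forall k, (n < k <= n + p)%nat -> f k = RtoC 0) -> psumC f (n + p) = psumC f n.
Proof.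
  induction p; intros H; [rewrite Nat.add_0_r; reflexivity|].
  rewrite Nat.add_succ_r. cbn [psumC].
  rewrite IHp by (intros; apply H; lia). rewrite H by lia. ring.
Qed.

Lemma psumR_single (f : nat -> R) (j K : nat) : (1 <= j)%nat ->
  psumR (fun i => if Nat.eqb i j then f i else 0) K = if Nat.leb j K then f j else 0.
Proof.
  intros Hj. induction K as [|K IH]; cbn [psumR].
  - destruct (Nat.leb_spec j 0); [lia | reflexivity].
  - rewrite IH. destruct (Nat.leb_spec j K), (Nat.leb_spec j (S K)),
      (Nat.eqb_spec (S K) j); subst; try lia; ring.
Qed.

Lemma fold_Cplus_acc (l : list C) (a : C) :
  fold_right Cplus a l = Cplus (fold_right Cplus (RtoC 0) l) a.
Proof. induction l; simpl; [ring | rewrite IHl; ring]. Qed.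

Lemma fold_Rplus_acc (l : list R) (a : R) :
  fold_right Rplus a l = fold_right Rplus 0 l + a.
Proof. induction l; simpl; [ring | rewrite IHl; ring]. Qed.

Lemma fold_Cplus_filter (f : nat -> C) (p : nat -> bool) (U : nat) :
  fold_right Cplus (RtoC 0) (map f (filter p (seq 1 U))) =
  psumC (fun n => if p n then f n else RtoC 0) U.
Proof.
  induction U; [reflexivity|].
  rewrite seq_S, filter_app, map_app, fold_right_app. cbn [psumC]. rewrite <- IHU.
  rewrite fold_Cplus_acc. f_equal. simpl. destruct (p (S U)); simpl; ring.
Qed.

Lemma fold_Rplus_filter (f : nat -> R) (p : nat -> bool) (U : nat) :
  fold_right Rplus 0 (map f (filter p (seq 1 U))) =
  psumR (fun n => if p n then f n else 0) U.
Proof.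
  induction U; [reflexivity|].
  rewrite seq_S, filter_app, map_app, fold_right_app. cbn [psumR]. rewrite <- IHU.
  rewrite fold_Rplus_acc. f_equal. simpl. destruct (p (S U)); simpl; ring.
Qed.

Lemma up_nat_gt (x : R) : 0 < x -> x < INR (Z.to_nat (up x)).
Proof.
  intros Hx. destruct (archimed x) as [A _].
  rewrite INR_IZR_INZ, Z2Nat.id by (apply le_IZR; lra). exact A.
Qed.

Lemma up_bound (x : R) (n : nat) : (Z.to_nat (up x) < n)%nat -> x < INR n.
Proof.
  intros H. destruct (archimed x) as [H1 _].
  assert (IZR (up x) <= INR n); [|lra].
  rewrite INR_IZR_INZ. apply IZR_le. lia.
Qed.

Lemma up_mono (x y : R) : x <= y -> (Z.to_nat (up x) <= Z.to_nat (up y))%nat.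
Proof.
  intros H. destruct (archimed x) as [A1 A2]. destruct (archimed y) as [B1 B2].
  assert (up x < up y + 1)%Z by (apply lt_IZR; rewrite plus_IZR; simpl; lra). lia.
Qed.

Lemma sumC_le_psumC (f : nat -> C) (x : R) (K : nat) : (Z.to_nat (up x) <= K)%nat ->
  sumC_le f x = psumC (fun n => if Rle_dec (INR n) x then f n else RtoC 0) K.
Proof.
  intros HK. unfold sumC_le. rewrite fold_Cplus_filter.
  replace K with (Z.to_nat (up x) + (K - Z.to_nat (up x)))%nat by lia.
  rewrite psumC_pad.
  - apply psumC_ext. intros k _. destruct (Rle_dec (INR k) x); reflexivity.
  - intros k Hk. destruct (Rle_dec (INR k) x) as [C|]; [|reflexivity].
    pose proof (up_bound x k ltac:(lia)). lra.
Qed.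

Lemma sumR_le_psumR (f : nat -> R) (x : R) (K : nat) : (Z.to_nat (up x) <= K)%nat ->
  sumR_le f x = psumR (fun n => if Rle_dec (INR n) x then f n else 0) K.
Proof.
  intros HK. unfold sumR_le. rewrite fold_Rplus_filter.
  replace K with (Z.to_nat (up x) + (K - Z.to_nat (up x)))%nat by lia.
  rewrite psumR_pad.
  - apply psumR_ext. intros k _. destruct (Rle_dec (INR k) x); reflexivity.
  - intros k Hk. destruct (Rle_dec (INR k) x) as [C|]; [|reflexivity].
    pose proof (up_bound x k ltac:(lia)). lra.
Qed.

Lemma conv1_psumC (g : nat -> C) (n K : nat) : (1 <= n <= K)%nat ->
  conv1 g n = psumC (fun m => if Nat.eqb (n mod m) 0 then g m else RtoC 0) K.
Proof.
  intros HK. unfold conv1. rewrite fold_Cplus_filter.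
  replace K with (n + (K - n))%nat by lia. rewrite psumC_pad; [reflexivity|].
  intros k Hk. rewrite Nat.mod_small by lia. destruct n; [lia | reflexivity].
Qed.

(** * Euler's constant

    With c_n = H_n - ln n we show that c_n decreases to [euler_gamma] with
    1/(2n+1) <= c_n - gamma <= 1/(2n); the two-sided bound comes from the
    elementary estimates 2x/(2+x) <= ln(1+x) <= x(2+x)/(2(1+x)). *)

Lemma ln1p_lower (x : R) : 0 <= x -> 2 * x / (2 + x) <= ln (1 + x).
Proof.
  intros Hx. destruct (Req_dec x 0) as [->|Hx0].
  { replace (1 + 0) with 1 by lra. rewrite ln_1. unfold Rdiv. lra. }
  set (f := fun t => ln (1 + t) - 2 * t / (2 + t)).
  pose proof (MVT_gen f 0 x (fun t => / (1 + t) - 4 / (2 + t) ^ 2)) as H.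
  rewrite Rmin_left, Rmax_right in H by lra.
  destruct H as [c [Hc Heq]].
  - intros t Ht. unfold f. auto_derive; [repeat split; lra|]. field. lra.
  - intros t Ht. apply derivable_continuous_pt, ex_derive_Reals_0.
    unfold f. auto_derive. repeat split; lra.
  - unfold f in Heq. replace (1 + 0) with 1 in Heq by lra. rewrite ln_1 in Heq.
    assert (/ (1 + c) - 4 / (2 + c) ^ 2 = c ^ 2 / ((1 + c) * (2 + c) ^ 2)) as E
      by (field; lra).
    assert (0 <= c ^ 2 / ((1 + c) * (2 + c) ^ 2)).
    { apply Rle_mult_inv_pos; [nra | apply Rmult_lt_0_compat; nra]. }
    replace (2 * 0 / (2 + 0)) with 0 in Heq by (field; lra). nra.
Qed.

Lemma ln1p_upper (x : R) : 0 <= x -> ln (1 + x) <= x * (2 + x) / (2 * (1 + x)).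
Proof.
  intros Hx. destruct (Req_dec x 0) as [->|Hx0].
  { replace (1 + 0) with 1 by lra. rewrite ln_1. unfold Rdiv. lra. }
  set (f := fun t => t * (2 + t) / (2 * (1 + t)) - ln (1 + t)).
  pose proof (MVT_gen f 0 x (fun t => (1 + / (1 + t) ^ 2) / 2 - / (1 + t))) as H.
  rewrite Rmin_left, Rmax_right in H by lra.
  destruct H as [c [Hc Heq]].
  - intros t Ht. unfold f. auto_derive; [repeat split; lra|]. field. lra.
  - intros t Ht. apply derivable_continuous_pt, ex_derive_Reals_0.
    unfold f. auto_derive. repeat split; lra.
  - unfold f in Heq. replace (1 + 0) with 1 in Heq by lra. rewrite ln_1 in Heq.
    assert ((1 + / (1 + c) ^ 2) / 2 - / (1 + c) = c ^ 2 / (2 * (1 + c) ^ 2)) as E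
      by (field; lra).
    assert (0 <= c ^ 2 / (2 * (1 + c) ^ 2)) by (apply Rle_mult_inv_pos; nra).
    replace (0 * (2 + 0) / (2 * 1) - 0) with 0 in Heq by (field; lra). nra.
Qed.

Definition euler_seq (n : nat) : R := harmonic n - ln (INR n).

Lemma harmonic_S (n : nat) : (1 <= n)%nat -> harmonic (S n) = harmonic n + / INR (S n).
Proof. intros H. destruct n as [|p]; [lia | reflexivity]. Qed.

Lemma euler_seq_step (k : nat) : (1 <= k)%nat ->
  1 / (2 * INR k + 1) - 1 / (2 * INR (S k) + 1) <= euler_seq k - euler_seq (S k) <=
  1 / (2 * INR k) - 1 / (2 * INR (S k)).
Proof.
  intros Hk. unfold euler_seq. rewrite harmonic_S by lia. rewrite S_INR.
  assert (HK : 1 <= INR k) by (apply (le_INR 1); lia).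
  replace (harmonic k - ln (INR k) - (harmonic k + / (INR k + 1) - ln (INR k + 1)))
    with (ln (1 + / INR k) - / (INR k + 1)).
  2:{ replace (1 + / INR k) with ((INR k + 1) / INR k) by (field; lra).
      rewrite ln_div by lra. ring. }
  assert (Hx : 0 <= / INR k) by (apply Rlt_le, Rinv_0_lt_compat; lra).
  pose proof (ln1p_lower _ Hx) as L. pose proof (ln1p_upper _ Hx) as U.
  split.
  - eapply Rle_trans; [|apply Rplus_le_compat_r; exact L].
    apply Rminus_le_0.
    replace (2 * / INR k / (2 + / INR k) + - / (INR k + 1) -
       (1 / (2 * INR k + 1) - 1 / (2 * (INR k + 1) + 1)))
      with (1 / ((2 * INR k + 1) * (INR k + 1) * (2 * INR k + 3))) by (field; lra).
    apply Rlt_le, Rdiv_lt_0_compat; [lra|]. apply Rmult_lt_0_compat; [|lra]. nra.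
  - eapply Rle_trans; [apply Rplus_le_compat_r; exact U|]. right. field. lra.
Qed.

Lemma euler_seq_gap (n p : nat) : (1 <= n)%nat ->
  1 / (2 * INR n + 1) - 1 / (2 * INR (n + p) + 1) <= euler_seq n - euler_seq (n + p) <=
  1 / (2 * INR n) - 1 / (2 * INR (n + p)).
Proof.
  intros Hn. induction p as [|p IH]; [rewrite Nat.add_0_r; lra|].
  rewrite Nat.add_succ_r. pose proof (euler_seq_step (n + p) ltac:(lia)). lra.
Qed.

Lemma euler_seq_1 : euler_seq 1 = 1.
Proof.
  unfold euler_seq, harmonic. simpl sum_f_R0. change (INR 1) with 1. rewrite ln_1. simpl. lra.
Qed.

Lemma euler_seq_2 : euler_seq 2 = 3 / 2 - ln 2.
Proof. unfold euler_seq, harmonic. simpl. replace (1 + 1) with 2 by lra. lra. Qed.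

Lemma euler_seq_3 : euler_seq 3 = 11 / 6 - ln 3.
Proof. unfold euler_seq, harmonic. simpl. replace (1 + 1 + 1) with 3 by lra. lra. Qed.

Lemma euler_gamma_lim : is_lim_seq (fun n => euler_seq (S n)) euler_gamma.
Proof.
  assert (Hex : ex_finite_lim_seq (fun n => euler_seq (S n))).
  { apply ex_finite_lim_seq_decr with (1 / 2).
    - intros n. pose proof (euler_seq_gap (S n) 1 ltac:(lia)) as [L _].
      rewrite Nat.add_1_r in L.
      assert (0 < INR (S n)) by (apply lt_0_INR; lia).
      assert (1 / (2 * INR (S (S n)) + 1) < 1 / (2 * INR (S n) + 1)); [|lra].
      rewrite (S_INR (S n)). apply Rmult_lt_compat_l; [lra|].
      apply Rinv_lt_contravar; nra.
    - intros n. pose proof (euler_seq_gap 1 n ltac:(lia)) as [_ U].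
      pose proof euler_seq_1.
      assert (0 < INR (S n)) by (apply lt_0_INR; lia).
      assert (0 < 1 / (2 * INR (S n))) by (apply Rdiv_lt_0_compat; lra).
      simpl (1 + n)%nat in U. simpl INR in U at 1. lra. }
  assert (E : euler_gamma = real (Lim_seq (fun n => euler_seq (S n))))
    by (rewrite Lim_seq_incr_1; reflexivity).
  destruct Hex as [l Hl]. rewrite E, (is_lim_seq_unique _ _ Hl). exact Hl.
Qed.

Lemma is_lim_inv_affine (a b : R) : 0 < a -> 0 < b ->
  is_lim_seq (fun p => 1 / (a * INR p + b)) 0.
Proof.
  intros Ha Hb.
  apply is_lim_seq_le_le with (u := fun _ => 0) (w := fun p => / Rmin a b * / INR (S p)).
  - intros p. assert (0 <= INR p) by apply pos_INR. rewrite S_INR.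
    assert (0 < Rmin a b) by (apply Rmin_glb_lt; lra).
    pose proof (Rmin_l a b). pose proof (Rmin_r a b). split.
    + apply Rlt_le, Rdiv_lt_0_compat; nra.
    + unfold Rdiv. rewrite Rmult_1_l, <- Rinv_mult. apply Rinv_le_contravar; nra.
  - apply is_lim_seq_const.
  - replace (Finite 0) with (Rbar_mult (/ Rmin a b) 0) by (simpl; f_equal; ring).
    apply is_lim_seq_scal_l.
    replace (Finite 0) with (Rbar_inv p_infty) by reflexivity.
    apply is_lim_seq_inv; [|discriminate].
    apply (is_lim_seq_incr_1 INR). apply is_lim_seq_INR.
Qed.

Lemma euler_seq_minus_gamma (n : nat) : (1 <= n)%nat ->
  1 / (2 * INR n + 1) <= euler_seq n - euler_gamma <= 1 / (2 * INR n).
Proof.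
  intros Hn.
  assert (Hlim : is_lim_seq (fun p => euler_seq (n + p)) euler_gamma).
  { pose proof (proj1 (is_lim_seq_incr_n _ (n - 1) _) euler_gamma_lim) as H.
    eapply is_lim_seq_ext; [|exact H]. intros p. simpl. f_equal. lia. }
  split.
  - assert (H : Rbar_le euler_gamma (euler_seq n - 1 / (2 * INR n + 1))).
    { apply is_lim_seq_le_loc with (u := fun p => euler_seq (n + p))
        (v := fun p => euler_seq n - 1 / (2 * INR n + 1) + 1 / (2 * INR (n + p) + 1)).
      - exists 0%nat. intros p _. pose proof (euler_seq_gap n p Hn). lra.
      - exact Hlim.
      - replace (Finite (euler_seq n - 1 / (2 * INR n + 1)))
          with (Rbar_plus (euler_seq n - 1 / (2 * INR n + 1)) 0) by (simpl; f_equal; ring).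
        apply is_lim_seq_plus'; [apply is_lim_seq_const|].
        pose proof (pos_INR n).
        eapply is_lim_seq_ext; [|apply (is_lim_inv_affine 2 (2 * INR n + 1)); lra].
        intros p. simpl. f_equal. rewrite plus_INR. ring. }
    simpl in H. lra.
  - assert (H : Rbar_le (euler_seq n - 1 / (2 * INR n)) euler_gamma).
    { apply is_lim_seq_le_loc with (v := fun p => euler_seq (n + p))
        (u := fun _ => euler_seq n - 1 / (2 * INR n)).
      - exists 0%nat. intros p _. pose proof (euler_seq_gap n p Hn).
        assert (0 < INR (n + p)) by (apply lt_0_INR; lia).
        assert (0 < 1 / (2 * INR (n + p))) by (apply Rdiv_lt_0_compat; lra). lra.
      - apply is_lim_seq_const.
      - exact Hlim. }
    simpl in H. lra.
Qed.

Lemma ln2_le : ln 2 <= 7 / 10.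
Proof.
  pose proof (exp_ge_taylor (7 / 10) 3 ltac:(lra)) as H. simpl in H.
  rewrite <- (ln_exp (7 / 10)). apply ln_le; lra.
Qed.

Lemma ln3_le : ln 3 <= 10 / 9.
Proof.
  pose proof (exp_ge_taylor (10 / 9) 4 ltac:(lra)) as H. simpl in H.
  rewrite <- (ln_exp (10 / 9)). apply ln_le; lra.
Qed.

Lemma euler_gamma_ge : 5 / 9 <= euler_gamma.
Proof.
  pose proof (euler_seq_minus_gamma 3 ltac:(lia)) as H. rewrite euler_seq_3 in H.
  simpl INR in H. pose proof ln3_le. lra.
Qed.

Lemma exp_euler_gamma_ge1 : 1 <= exp euler_gamma.
Proof. pose proof euler_gamma_ge. pose proof (exp_ineq1_le euler_gamma). lra. Qed.

(** The rescaled error n (c_n - gamma) lies in [1 - gamma, 1/2]; for n <= 3 the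
    lower bound is checked on the exact values, for n >= 4 it follows from
    n / (2n + 1) >= 4/9 >= 1 - gamma. *)
Lemma euler_seq_scaled_lower (n : nat) : (1 <= n)%nat ->
  1 - euler_gamma <= INR n * (euler_seq n - euler_gamma).
Proof.
  intros Hn. pose proof euler_gamma_ge as G.
  destruct n as [|[|[|[|n]]]]; try lia.
  - rewrite euler_seq_1. simpl INR. lra.
  - pose proof (euler_seq_minus_gamma 2 ltac:(lia)) as H. rewrite euler_seq_2 in *.
    simpl INR in *. pose proof ln2_le. lra.
  - pose proof (euler_seq_minus_gamma 3 ltac:(lia)) as H. rewrite euler_seq_3 in *.
    simpl INR in *. pose proof ln3_le. lra.
  - pose proof (euler_seq_minus_gamma (S (S (S (S n)))) ltac:(lia)) as [L _].
    set (N := INR (S (S (S (S n))))) in *.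
    assert (HN4 : 4 <= N) by (unfold N; rewrite !S_INR; pose proof (pos_INR n); lra).
    assert (4 / 9 <= N * (1 / (2 * N + 1))).
    { replace (N * (1 / (2 * N + 1))) with (N / (2 * N + 1)) by (field; lra).
      apply Rmult_le_reg_r with (2 * N + 1); [lra|].
      replace (N / (2 * N + 1) * (2 * N + 1)) with N by (field; lra). lra. }
    assert (N * (1 / (2 * N + 1)) <= N * (euler_seq (S (S (S (S n)))) - euler_gamma))
      by (apply Rmult_le_compat_l; lra).
    lra.
Qed.

Lemma euler_seq_scaled_upper (n : nat) : (1 <= n)%nat ->
  INR n * (euler_seq n - euler_gamma) <= 1 / 2.
Proof.
  intros Hn. pose proof (euler_seq_minus_gamma n Hn) as [_ U].
  assert (1 <= INR n) by (apply (le_INR 1); lia).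
  apply Rle_trans with (INR n * (1 / (2 * INR n))); [apply Rmult_le_compat_l; lra|].
  right. field. lra.
Qed.

Lemma harmonic_ln_lower (n : nat) (y : R) : (1 <= n)%nat -> INR n <= y < INR n + 1 ->
  - (euler_gamma / y) <= harmonic n - ln y - euler_gamma.
Proof.
  intros Hn [Hy1 Hy2]. pose proof euler_gamma_ge as G.
  assert (HN : 1 <= INR n) by (apply (le_INR 1); lia).
  pose proof (euler_seq_scaled_lower (S n) ltac:(lia)) as L.
  unfold euler_seq in L. rewrite harmonic_S, S_INR in L by lia.
  assert (ln y <= ln (INR n + 1)) by (apply ln_le; lra).
  assert (Hn1 : - (euler_gamma / (INR n + 1)) <= harmonic n - ln (INR n + 1) - euler_gamma).
  { apply Rmult_le_reg_r with (INR n + 1); [lra|].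
    replace (- (euler_gamma / (INR n + 1)) * (INR n + 1)) with (- euler_gamma) by (field; lra).
    replace ((harmonic n - ln (INR n + 1) - euler_gamma) * (INR n + 1))
      with ((INR n + 1) * (harmonic n + / (INR n + 1) - ln (INR n + 1) - euler_gamma) - 1)
      by (field; lra).
    lra. }
  assert (euler_gamma / (INR n + 1) <= euler_gamma / y).
  { unfold Rdiv. apply Rmult_le_compat_l; [lra|]. apply Rinv_le_contravar; lra. }
  lra.
Qed.

Lemma harmonic_ln_upper (n : nat) (y : R) : (1 <= n)%nat -> INR n <= y < INR n + 1 ->
  harmonic n - ln y - euler_gamma <= euler_gamma / y.
Proof.
  intros Hn [Hy1 Hy2]. pose proof euler_gamma_ge as G.
  assert (HN : 1 <= INR n) by (apply (le_INR 1); lia).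
  pose proof (euler_seq_scaled_upper n Hn) as U.
  pose proof (euler_seq_minus_gamma n Hn) as [_ CU].
  set (e := euler_seq n - euler_gamma) in *.
  assert (He : e <= 1 / 2).
  { apply Rle_trans with (1 / (2 * INR n)); [exact CU|].
    apply Rmult_le_reg_r with (2 * INR n); [lra|].
    replace (1 / (2 * INR n) * (2 * INR n)) with 1 by (field; lra). lra. }
  assert (Hl : ln (INR n) - ln y <= INR n / y - 1).
  { rewrite <- ln_div by lra. pose proof (exp_ineq1_le (ln (INR n / y))).
    rewrite exp_ln in H by (apply Rdiv_lt_0_compat; lra). lra. }
  replace (harmonic n - ln y - euler_gamma) with (e + (ln (INR n) - ln y))
    by (unfold e, euler_seq; ring).
  assert (e + INR n / y - 1 <= euler_gamma / y); [|lra].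
  apply Rmult_le_reg_r with y; [lra|].
  replace ((e + INR n / y - 1) * y) with (INR n * e + (y - INR n) * (e - 1)) by (field; lra).
  replace (euler_gamma / y * y) with euler_gamma by (field; lra).
  assert (0 <= (y - INR n) * (1 - e)) by (apply Rmult_le_pos; lra).
  lra.
Qed.

Definition floor_nat (y : R) : nat := Z.to_nat (up y - 1).

Lemma floor_nat_spec (y : R) : 0 <= y -> INR (floor_nat y) <= y < INR (floor_nat y) + 1.
Proof.
  intros Hy. destruct (archimed y) as [H1 H2]. unfold floor_nat.
  assert (Hu : (1 <= up y)%Z) by (assert (0 < up y)%Z by (apply lt_IZR; simpl; lra); lia).
  rewrite INR_IZR_INZ, Z2Nat.id by lia. rewrite minus_IZR. simpl. lra.
Qed.

Lemma sumR_le_floor (f : nat -> R) (y : R) : 0 <= y -> sumR_le f y = psumR f (floor_nat y).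
Proof.
  intros Hy. pose proof (floor_nat_spec y Hy) as [F1 F2].
  set (n := floor_nat y) in *.
  assert (Hup : (n <= Z.to_nat (up y))%nat) by (unfold n, floor_nat; lia).
  rewrite (sumR_le_psumR f y (n + (Z.to_nat (up y) - n))) by lia.
  rewrite psumR_pad.
  - apply psumR_ext. intros k Hk. destruct (Rle_dec (INR k) y) as [|C]; [reflexivity|].
    exfalso. apply C. apply Rle_trans with (INR n); [apply le_INR; lia | lra].
  - intros k Hk. destruct (Rle_dec (INR k) y) as [C|]; [|reflexivity].
    exfalso. assert (INR n + 1 <= INR k) by (rewrite <- S_INR; apply le_INR; lia). lra.
Qed.

Definition harm (y : R) : R := sumR_le (fun k => / INR k) y.

Lemma psumR_inv_harmonic (n : nat) : (1 <= n)%nat -> psumR (fun k => / INR k) n = harmonic n.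
Proof.
  induction n as [|n IH]; intros Hn; [lia|].
  destruct n as [|n]; [unfold harmonic; simpl; lra|].
  cbn [psumR] in *. rewrite IH, (harmonic_S (S n)) by lia. reflexivity.
Qed.

(** H vanishes below 1; this kills the terms with m > D in the divisor sum. *)
Lemma harm_small (y : R) : 0 <= y < 1 -> harm y = 0.
Proof.
  intros Hy. unfold harm. rewrite sumR_le_floor by lra.
  pose proof (floor_nat_spec y ltac:(lra)) as [F _].
  destruct (floor_nat y) as [|n]; [reflexivity|].
  rewrite S_INR in F. pose proof (pos_INR n). lra.
Qed.

Lemma harm_estimate (y : R) : 1 <= y -> Rabs (harm y - ln y - euler_gamma) <= euler_gamma / y.
Proof.
  intros Hy. unfold harm. rewrite sumR_le_floor by lra.
  pose proof (floor_nat_spec y ltac:(lra)) as F.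
  assert (Hn : (1 <= floor_nat y)%nat).
  { destruct (floor_nat y); [simpl in F; lra | lia]. }
  rewrite psumR_inv_harmonic by exact Hn.
  apply Rabs_le. split; [apply harmonic_ln_lower | apply harmonic_ln_upper]; assumption.
Qed.

(** * Exchanging the divisor sum

    sum_{n <= D} (g * 1)(n) / n = sum_m g(m)/m * H(D/m): each n = k m with
    k m <= D contributes 1/(k m). *)

Lemma divides_indicator (m n K : nat) : (1 <= m)%nat -> (1 <= n <= K)%nat ->
  (if Nat.eqb (n mod m) 0 then 1 else 0) =
  psumR (fun k => if Nat.eqb (k * m) n then 1 else 0) K.
Proof.
  intros Hm Hn. destruct (Nat.eqb_spec (n mod m) 0) as [E|E].
  - apply Nat.Div0.mod_divides in E. destruct E as [q Hq].
    assert (Hq1 : (1 <= q <= K)%nat) by (destruct q; nia).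
    transitivity (psumR (fun k => if Nat.eqb k q then 1 else 0) K).
    { rewrite (psumR_single (fun _ => 1)) by lia. destruct (Nat.leb_spec q K); lia + ring. }
    apply psumR_ext. intros k _. subst n.
    destruct (Nat.eqb_spec k q), (Nat.eqb_spec (k * m) (m * q)); subst; reflexivity || nia.
  - rewrite (psumR_ext _ (fun _ => 0)), psumR_zero; [reflexivity|].
    intros k _. destruct (Nat.eqb_spec (k * m) n) as [<-|]; [|reflexivity].
    exfalso. apply E, Nat.Div0.mod_mul.
Qed.

Lemma multiples_sum (m K : nat) (D : R) : (1 <= m)%nat -> 0 <= D ->
  (Z.to_nat (up D) <= K)%nat ->
  psumR (fun n => if Rle_dec (INR n) D
                  then (if Nat.eqb (n mod m) 0 then 1 else 0) / INR n else 0) K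
  = harm (D / INR m) / INR m.
Proof.
  intros Hm HD HK.
  assert (HM : 1 <= INR m) by (apply (le_INR 1); lia).
  set (h := fun n => if Rle_dec (INR n) D then / INR n else 0).
  (* write [m | n] as a sum over k of [k m = n], then sum over n first *)
  transitivity (psumR (fun n => psumR (fun k => if Nat.eqb n (k * m) then h n else 0) K) K).
  - apply psumR_ext. intros n Hn. unfold h. destruct (Rle_dec (INR n) D).
    + rewrite (divides_indicator m n K) by lia.
      unfold Rdiv. rewrite Rmult_comm, <- psumR_scal. apply psumR_ext. intros k _.
      destruct (Nat.eqb_spec n (k * m)), (Nat.eqb_spec (k * m) n); try lia; ring.
    + rewrite (psumR_ext _ (fun _ => 0)), psumR_zero; [reflexivity|].
      intros k _. destruct (Nat.eqb n (k * m)); reflexivity.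
  - rewrite psumR_switch. unfold harm.
    rewrite (sumR_le_psumR _ _ K).
    2:{ apply Nat.le_trans with (2 := HK), up_mono, Rle_div_l; nra. }
    match goal with |- _ = ?p / INR m => replace (p / INR m) with (/ INR m * p)
      by (unfold Rdiv; ring) end.
    rewrite <- psumR_scal. apply psumR_ext. intros k Hk.
    rewrite psumR_single by nia. unfold h. rewrite mult_INR.
    pose proof (Rle_div_r (INR k) D (INR m) ltac:(lra)).
    destruct (Rle_dec (INR k * INR m) D), (Rle_dec (INR k) (D / INR m)); try tauto.
    + destruct (Nat.leb_spec (k * m) K); [rewrite Rinv_mult; ring|].
      exfalso. pose proof (up_bound D (k * m) ltac:(lia)). rewrite mult_INR in *. lra.
    + destruct (Nat.leb (k * m) K); ring.
Qed.

Lemma RtoC_neq0 (x : R) : x <> 0 -> RtoC x <> RtoC 0.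
Proof. intros H E. apply H, RtoC_inj, E. Qed.

Definition alpha (g : nat -> C) (m : nat) : C := (g m / RtoC (INR m))%C.

Lemma divisor_sum_swap (g : nat -> C) (D : R) (K : nat) : 0 <= D ->
  (Z.to_nat (up D) <= K)%nat ->
  sumC_le (fun n => (conv1 g n / RtoC (INR n))%C) D =
  psumC (fun m => (alpha g m * RtoC (harm (D / INR m)))%C) K.
Proof.
  intros HD HK. rewrite (sumC_le_psumC _ _ K HK).
  set (r := fun n m => if Rle_dec (INR n) D
                       then (if Nat.eqb (n mod m) 0 then 1 else 0) / INR n else 0).
  transitivity (psumC (fun n => psumC (fun m => (RtoC (r n m) * g m)%C) K) K).
  - apply psumC_ext. intros n Hn. unfold r.
    assert (HnR : INR n <> 0) by (apply not_0_INR; lia).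
    destruct (Rle_dec (INR n) D).
    + rewrite (conv1_psumC g n K) by lia.
      unfold Cdiv. rewrite Cmult_comm, <- psumC_scal. apply psumC_ext. intros m _.
      destruct (Nat.eqb (n mod m) 0).
      * rewrite RtoC_div by exact HnR. field. apply RtoC_neq0, HnR.
      * unfold Rdiv. rewrite Rmult_0_l. ring.
    + rewrite (psumC_ext _ (fun _ => RtoC 0)), psumC_zero; [reflexivity|].
      intros m _. ring.
  - rewrite psumC_switch. apply psumC_ext. intros m Hm.
    assert (HmR : INR m <> 0) by (apply not_0_INR; lia).
    transitivity (RtoC (psumR (fun n => r n m) K) * g m)%C.
    + rewrite RtoC_psumR, Cmult_comm, <- psumC_scal. apply psumC_ext. intros n _. ring.
    + unfold r, alpha. rewrite multiples_sum by (lia || lra).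
      rewrite RtoC_div by exact HmR. field. apply RtoC_neq0, HmR.
Qed.

Lemma filterlim_pair_locally {T : Type} {F : (T -> Prop) -> Prop} {FF : Filter F}
  {U V : UniformSpace} (u : T -> U * V) (l : U * V) :
  filterlim (fun x => fst (u x)) F (locally (fst l)) ->
  filterlim (fun x => snd (u x)) F (locally (snd l)) ->
  @filterlim _ (prod_UniformSpace U V) u F (locally l).
Proof.
  intros H1 H2. apply filterlim_locally. intros eps.
  apply filterlim_locally with (eps := eps) in H1.
  apply filterlim_locally with (eps := eps) in H2.
  generalize (filter_and _ _ H1 H2). apply filter_imp. intros x [A B]. split; assumption.
Qed.

Lemma filterlim_locally_pair {T : Type} {F : (T -> Prop) -> Prop} {FF : Filter F}
  {U V : UniformSpace} (u : T -> U * V) (l : U * V) :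
  @filterlim _ (prod_UniformSpace U V) u F (locally l) ->
  filterlim (fun x => fst (u x)) F (locally (fst l)) /\
  filterlim (fun x => snd (u x)) F (locally (snd l)).
Proof.
  intros H. split; apply filterlim_locally; intros eps;
    apply (proj1 (filterlim_locally _ _)) with (eps := eps) in H;
    revert H; apply filter_imp; intros x [A B]; assumption.
Qed.

Lemma sum_n_psumC (a : nat -> C) (n : nat) :
  @sum_n C_AbelianMonoid (fun k => a (S k)) n = psumC a (S n).
Proof.
  induction n; [rewrite sum_O; symmetry; apply Cplus_0_l|].
  rewrite sum_Sn, IHn. reflexivity.
Qed.

Lemma sum_n_psumR (a : nat -> R) (n : nat) : sum_n (fun k => a (S k)) n = psumR a (S n).
Proof.
  induction n; [rewrite sum_O; symmetry; apply Rplus_0_l|].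
  rewrite sum_Sn, IHn. reflexivity.
Qed.

Lemma is_series_C_parts (a : nat -> C) (s : C) :
  @is_series C_AbsRing C_NormedModule (fun k => a (S k)) s ->
  is_lim_seq (psumR (fun k => Re (a k))) (Re s) /\
  is_lim_seq (psumR (fun k => Im (a k))) (Im s).
Proof.
  intros H.
  assert (H' : @filterlim nat (prod_UniformSpace R_UniformSpace R_UniformSpace)
                (fun n => psumC a (S n)) eventually (locally s)).
  { eapply filterlim_ext; [|exact H]. intros n. apply sum_n_psumC. }
  destruct (filterlim_locally_pair _ _ H') as [H1 H2].
  split; apply (is_lim_seq_incr_1 (psumR _)); eapply filterlim_ext;
    [| exact H1 | | exact H2]; intros n; simpl;
    [rewrite <- Re_psumC | rewrite <- Im_psumC]; reflexivity.
Qed.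

Lemma series_tail (b : nat -> R) (s t : R) (N : nat) :
  t < INR N + 1 -> is_lim_seq (psumR b) s ->
  Series (fun k => if Rlt_dec t (INR (S k)) then b (S k) else 0) =
  s - psumR (fun m => if Rle_dec (INR m) t then b m else 0) N.
Proof.
  intros HN H. apply is_series_unique.
  set (c := fun m => if Rlt_dec t (INR m) then b m else 0).
  set (bt := fun m => if Rle_dec (INR m) t then b m else 0).
  assert (Hc : is_lim_seq (psumR c) (s - psumR bt N)).
  { apply is_lim_seq_ext_loc with (u := fun n => psumR b n - psumR bt N).
    - exists N. intros n Hn.
      replace (psumR bt N) with (psumR bt n).
      2:{ replace n with (N + (n - N))%nat by lia. apply psumR_pad.
          intros k Hk. unfold bt. destruct (Rle_dec (INR k) t) as [C|]; [|reflexivity].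
          exfalso. assert (INR N + 1 <= INR k) by (rewrite <- S_INR; apply le_INR; lia). lra. }
      replace (psumR b n - psumR bt n) with (psumR (fun m => b m + - 1 * bt m) n)
        by (rewrite psumR_plus, psumR_scal; ring).
      apply psumR_ext. intros k _. unfold c, bt.
      destruct (Rlt_dec t (INR k)), (Rle_dec (INR k) t); lra.
    - apply is_lim_seq_minus'; [exact H | apply is_lim_seq_const]. }
  apply (is_lim_seq_incr_1 (psumR c)) in Hc.
  unfold is_series. eapply filterlim_ext; [|exact Hc]. intros n. symmetry. apply (sum_n_psumR c).
Qed.


Lemma Re_if (P : Prop) (d : {P} + {~ P}) (z : C) :
  Re (if d then z else RtoC 0) = if d then Re z else 0.
Proof. destruct d; reflexivity. Qed.

Lemma Im_if (P : Prop) (d : {P} + {~ P}) (z : C) :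
  Im (if d then z else RtoC 0) = if d then Im z else 0.
Proof. destruct d; reflexivity. Qed.

Lemma Gsharp_parts (g : nat -> C) (s : C) (t : R) (N : nat) :
  @is_series C_AbsRing C_NormedModule (fun k => alpha g (S k)) s ->
  t < INR N + 1 ->
  Re (Gsharp g t) = Re s - psumR (fun m => if Rle_dec (INR m) t then Re (alpha g m) else 0) N /\
  Im (Gsharp g t) = Im s - psumR (fun m => if Rle_dec (INR m) t then Im (alpha g m) else 0) N.
Proof.
  intros HS HN. destruct (is_series_C_parts _ _ HS) as [Hre Him]. split.
  - rewrite <- (series_tail _ _ t N HN Hre). apply Series_ext. intros k. apply Re_if.
  - rewrite <- (series_tail _ _ t N HN Him). apply Series_ext. intros k. apply Im_if.
Qed.

(** * Abel summation with the logarithm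

    If sum beta(m) = s and sum beta(m) ln m both converge, then the tails
    satisfy (s - sum_{m <= n} beta(m)) ln n -> 0.  Writing T_n for the tail of
    the second series, beta(N) = (T_{N-1} - T_N) / ln N, and summation by parts
    bounds the tail of the first series by 2 sup_{m >= n} |T_m| / ln (n + 1). *)

Lemma ln_pos_gt1 (x : R) : 1 < x -> 0 < ln x.
Proof. intros H. rewrite <- ln_1. apply ln_increasing; lra. Qed.

Lemma ln_succ_pos (N : nat) : (1 <= N)%nat -> 0 < ln (INR N + 1).
Proof.
  intros H. apply ln_pos_gt1. assert (1 <= INR N) by (apply (le_INR 1); lia). lra.
Qed.

Section AbelSummation.
Variables (beta : nat -> R) (s L : R).
Hypothesis Hs : is_lim_seq (psumR beta) s.
Hypothesis HL : is_lim_seq (psumR (fun m => beta m * ln (INR m))) L.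

Let T (n : nat) : R := L - psumR (fun m => beta m * ln (INR m)) n.

(** The summation-by-parts quantity, which tends to s - sum_{m <= n} beta(m). *)
Let Q (n N : nat) : R := (psumR beta N - psumR beta n) + T N / ln (INR N + 1).

Lemma abel_tail_lim : is_lim_seq T 0.
Proof.
  unfold T. replace (Finite 0) with (Rbar_minus L L) by (simpl; f_equal; ring).
  apply is_lim_seq_minus'; [apply is_lim_seq_const | exact HL].
Qed.

(** One step of summation by parts, using beta(N) = (T_{N-1} - T_N) / ln N. *)
Lemma abel_Q_step (n N : nat) : (1 <= N)%nat ->
  Q n (S N) = Q n N + T (S N) * (/ ln (INR (S N) + 1) - / ln (INR N + 1)).
Proof.
  intros HN. pose proof (ln_succ_pos N HN). pose proof (ln_succ_pos (S N) ltac:(lia)).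
  assert (0 < ln (INR (S N))) by (rewrite S_INR; apply ln_succ_pos; lia).
  assert (Hb : beta (S N) = (T N - T (S N)) / ln (INR (S N))).
  { unfold T. cbn [psumR]. field. lra. }
  unfold Q. cbn [psumR]. rewrite Hb. rewrite S_INR in *. field. lra.
Qed.

Lemma abel_Q_bound (n p : nat) (eps : R) : (1 <= n)%nat ->
  (forall m, (n <= m)%nat -> Rabs (T m) <= eps) ->
  Rabs (Q n (n + p)) <= 2 * eps / ln (INR n + 1) - eps / ln (INR (n + p) + 1).
Proof.
  intros Hn HT. induction p as [|p IH].
  - rewrite Nat.add_0_r. unfold Q. replace (psumR beta n - psumR beta n) with 0 by ring.
    pose proof (ln_succ_pos n Hn).
    rewrite Rplus_0_l. unfold Rdiv. rewrite Rabs_mult, (Rabs_right (/ _))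
      by (apply Rle_ge, Rlt_le, Rinv_0_lt_compat; lra).
    assert (Rabs (T n) * / ln (INR n + 1) <= eps * / ln (INR n + 1)); [|lra].
    apply Rmult_le_compat_r; [apply Rlt_le, Rinv_0_lt_compat; lra | apply HT; lia].
  - rewrite Nat.add_succ_r. set (N := (n + p)%nat) in *.
    pose proof (ln_succ_pos N ltac:(lia)). pose proof (ln_succ_pos (S N) ltac:(lia)).
    assert (/ ln (INR (S N) + 1) <= / ln (INR N + 1)).
    { apply Rinv_le_contravar; [lra|]. pose proof (pos_INR N).
      apply ln_le; [lra|]. rewrite S_INR; lra. }
    rewrite abel_Q_step by lia.
    eapply Rle_trans; [apply Rabs_triang|]. rewrite Rabs_mult.
    rewrite Rabs_minus_sym, (Rabs_right (/ ln (INR N + 1) - _)) by lra.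
    assert (Rabs (T (S N)) * (/ ln (INR N + 1) - / ln (INR (S N) + 1)) <=
            eps * (/ ln (INR N + 1) - / ln (INR (S N) + 1))).
    { apply Rmult_le_compat_r; [lra|]. apply HT. lia. }
    unfold Rdiv in *. lra.
Qed.

Lemma abel_Q_lim (n : nat) : is_lim_seq (Q n) (s - psumR beta n).
Proof.
  unfold Q. replace (Finite (s - psumR beta n)) with (Rbar_plus (s - psumR beta n) 0)
    by (simpl; f_equal; ring).
  apply is_lim_seq_plus'; [apply is_lim_seq_minus'; [exact Hs | apply is_lim_seq_const]|].
  pose proof (ln_succ_pos 1 ltac:(lia)) as L2. simpl INR in L2.
  set (c := / ln (1 + 1)).
  assert (Hc : is_lim_seq (fun N => c * Rabs (T N)) 0).
  { replace (Finite 0) with (Rbar_mult c (Rbar_abs 0)) by (simpl; rewrite Rabs_R0; f_equal; ring).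
    apply is_lim_seq_scal_l, is_lim_seq_abs, abel_tail_lim. }
  apply is_lim_seq_le_le_loc with (u := fun N => - (c * Rabs (T N))) (w := fun N => c * Rabs (T N)).
  - exists 1%nat. intros N HN. pose proof (ln_succ_pos N HN).
    assert (ln (1 + 1) <= ln (INR N + 1)).
    { apply ln_le; [lra|]. assert (1 <= INR N) by (apply (le_INR 1); lia). lra. }
    apply Rabs_le_between. unfold Rdiv. rewrite Rabs_mult, Rmult_comm.
    rewrite (Rabs_right (/ _)) by (apply Rle_ge, Rlt_le, Rinv_0_lt_compat; lra).
    apply Rmult_le_compat_r; [apply Rabs_pos|]. apply Rinv_le_contravar; lra.
  - replace (Finite 0) with (Rbar_opp 0) by (simpl; f_equal; ring).
    apply -> is_lim_seq_opp. exact Hc.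
  - exact Hc.
Qed.

Lemma abel_tail_bound (n : nat) (eps : R) : (1 <= n)%nat ->
  (forall m, (n <= m)%nat -> Rabs (T m) <= eps) ->
  Rabs (s - psumR beta n) <= 2 * eps / ln (INR n + 1).
Proof.
  intros Hn HT.
  assert (H : Rbar_le (Rbar_abs (s - psumR beta n)) (2 * eps / ln (INR n + 1))).
  2:{ exact H. }
  apply is_lim_seq_le_loc with (u := fun N => Rabs (Q n N)) (v := fun _ => 2 * eps / ln (INR n + 1)).
  - exists n. intros N HN. replace N with (n + (N - n))%nat by lia.
    eapply Rle_trans; [apply (abel_Q_bound n (N - n) eps Hn HT)|].
    assert (0 < ln (INR (n + (N - n)) + 1)) by (apply ln_succ_pos; lia).
    assert (0 <= eps / ln (INR (n + (N - n)) + 1)); [|lra].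
    unfold Rdiv. apply Rmult_le_pos; [|apply Rlt_le, Rinv_0_lt_compat; lra].
    eapply Rle_trans; [apply Rabs_pos | apply (HT n); lia].
  - apply is_lim_seq_abs, abel_Q_lim.
  - apply is_lim_seq_const.
Qed.

Lemma abel_lim : is_lim_seq (fun n => (s - psumR beta n) * ln (INR n + 1)) 0.
Proof.
  apply is_lim_seq_spec. intros eps.
  pose proof abel_tail_lim as TL. apply is_lim_seq_spec in TL.
  assert (He : 0 < eps / 3) by (destruct eps; simpl; lra).
  destruct (TL (mkposreal _ He)) as [N0 HN0]. simpl in HN0.
  exists (max N0 1). intros n Hn.
  assert (Hb : Rabs (s - psumR beta n) <= 2 * (eps / 3) / ln (INR n + 1)).
  { apply abel_tail_bound; [lia|]. intros m Hm.
    specialize (HN0 m ltac:(lia)). rewrite Rminus_0_r in HN0. lra. }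
  pose proof (ln_succ_pos n ltac:(lia)).
  rewrite Rminus_0_r, Rabs_mult, (Rabs_right (ln _)) by lra.
  apply Rle_lt_trans with (2 * (eps / 3) / ln (INR n + 1) * ln (INR n + 1)).
  - apply Rmult_le_compat_r; lra.
  - replace (2 * (eps / 3) / ln (INR n + 1) * ln (INR n + 1)) with (2 * (eps / 3))
      by (field; lra).
    destruct eps; simpl in *; lra.
Qed.
End AbelSummation.

Lemma is_RInt_inv (p q : R) : 0 < p -> p <= q -> is_RInt (fun u => / u) p q (ln q - ln p).
Proof.
  intros Hp Hq. apply (is_RInt_derive ln (fun u => / u)).
  - intros x Hx. rewrite Rmin_left, Rmax_right in Hx by lra. apply is_derive_ln. lra.
  - intros x Hx. rewrite Rmin_left, Rmax_right in Hx by lra. apply continuous_Rinv. lra.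
Qed.

Lemma is_RInt_zero (a b : R) : is_RInt (fun _ => 0) a b 0.
Proof.
  pose proof (is_RInt_const (V := R_NormedModule) a b 0) as H.
  change (scal (b - a) 0) with ((b - a) * 0) in H. rewrite Rmult_0_r in H. exact H.
Qed.

(** The integral over [a, b] of 1_{u >= c} du / u. *)
Definition step_log (a b c : R) : R :=
  if Rle_dec c a then ln b - ln a else if Rle_dec c b then ln b - ln c else 0.

Lemma is_RInt_step_inv (a b c : R) : 0 < a -> a <= b ->
  is_RInt (fun u => if Rle_dec c u then / u else 0) a b (step_log a b c).
Proof.
  intros Ha Hab. unfold step_log.
  assert (Hon : forall p q, a <= p -> c <= p -> p <= q -> q <= b ->
            is_RInt (fun u => if Rle_dec c u then / u else 0) p q (ln q - ln p)).
  { intros p q Hp Hcp Hpq Hqb. apply is_RInt_ext with (fun u => / u); [|apply is_RInt_inv; lra].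
    intros x Hx. rewrite Rmin_left, Rmax_right in Hx by lra.
    destruct (Rle_dec c x); [reflexivity | lra]. }
  assert (Hoff : forall p q, p <= q -> q <= c ->
            is_RInt (fun u => if Rle_dec c u then / u else 0) p q 0).
  { intros p q Hpq Hqc. apply is_RInt_ext with (fun _ => 0); [|apply is_RInt_zero].
    intros x Hx. rewrite Rmin_left, Rmax_right in Hx by lra.
    destruct (Rle_dec c x); [lra | reflexivity]. }
  destruct (Rle_dec c a) as [Hca|Hca]; [apply Hon; lra|].
  destruct (Rle_dec c b) as [Hcb|Hcb]; [|apply Hoff; lra].
  pose proof (is_RInt_Chasles (V := R_NormedModule) _ a c b _ _
                (Hoff a c ltac:(lra) ltac:(lra)) (Hon c b ltac:(lra) ltac:(lra) ltac:(lra) ltac:(lra)))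
    as H.
  change (plus 0 (ln b - ln c)) with (0 + (ln b - ln c)) in H. rewrite Rplus_0_l in H. exact H.
Qed.

Lemma is_RInt_psumR (f : nat -> R -> R) (v : nat -> R) (a b : R) (N : nat) :
  (forall m, (1 <= m <= N)%nat -> is_RInt (f m) a b (v m)) ->
  is_RInt (fun t => psumR (fun m => f m t) N) a b (psumR v N).
Proof.
  induction N; intros H; cbn [psumR]; [apply is_RInt_zero|].
  apply (is_RInt_plus (fun t => psumR (fun m => f m t) N) (f (S N))).
  - apply IHN. intros m Hm. apply H. lia.
  - apply H. lia.
Qed.

Lemma is_RInt_gen_from_primitive {V : NormedModule R_AbsRing} (f J : R -> V) (X : R) (l : V) :
  (forall b, X <= b -> is_RInt f X b (J b)) ->
  filterlim J (Rbar_locally p_infty) (locally l) ->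
  is_RInt_gen f (at_point X) (Rbar_locally p_infty) l.
Proof.
  intros HJ Hl P HP. unfold filtermapi.
  apply Filter_prod with (Q := fun a => a = X) (R := fun b => X <= b /\ P (J b)).
  - reflexivity.
  - apply filter_and; [exists X; intros; lra | apply Hl, HP].
  - intros a b -> [Hb HPb]. exists (J b). split; [apply HJ | ]; assumption.
Qed.

(** * The integral of a series tail against dt/t *)

Section TailIntegral.
Variables (G : R -> R) (beta : nat -> R) (s L X : R) (K : nat).
Hypothesis HX : 0 < X.
Hypothesis HK : X < INR K + 1.
Hypothesis HG : forall t N, t < INR N + 1 ->
  G t = s - psumR (fun m => if Rle_dec (INR m) t then beta m else 0) N.
Hypothesis Hs : is_lim_seq (psumR beta) s.
Hypothesis HL : is_lim_seq (psumR (fun m => beta m * ln (INR m))) L.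

(** int_X^b G(t) dt/t, computed termwise: G(t)/t = s/t - sum_m beta(m) 1_{t >= m}/t. *)
Definition tail_primitive (b : R) : R :=
  s * (ln b - ln X) - psumR (fun m => beta m * step_log X b (INR m)) (floor_nat b).

Definition tail_integral : R :=
  L - s * ln X + psumR (fun m => beta m * (if Rle_dec (INR m) X then ln X - ln (INR m) else 0)) K.

Lemma tail_primitive_correct (b : R) : X <= b ->
  is_RInt (fun t => G t / t) X b (tail_primitive b).
Proof.
  intros Hb. pose proof (floor_nat_spec b ltac:(lra)) as [F1 F2].
  apply is_RInt_ext with (fun t => s * / t -
    psumR (fun m => beta m * (if Rle_dec (INR m) t then / t else 0)) (floor_nat b)).
  - intros t Ht. rewrite Rmin_left, Rmax_right in Ht by lra.
    rewrite (HG t (floor_nat b)) by lra. unfold Rdiv. rewrite Rmult_minus_distr_r.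
    f_equal. rewrite Rmult_comm, <- psumR_scal. apply psumR_ext. intros k _.
    destruct (Rle_dec (INR k) t); ring.
  - apply (is_RInt_minus (V := R_NormedModule)).
    + apply (is_RInt_scal (V := R_NormedModule)). apply is_RInt_inv; lra.
    + apply is_RInt_psumR. intros m _. apply (is_RInt_scal (V := R_NormedModule)).
      apply is_RInt_step_inv; lra.
Qed.

(** The distance to the limit is (s - sum_{m <= b} beta(m)) ln b plus a tail of
    the logarithmic series; both tend to 0 by [abel_lim]. *)
Lemma tail_primitive_gap (b : R) : X <= b -> (K <= floor_nat b)%nat ->
  tail_primitive b - tail_integral =
  (s - psumR beta (floor_nat b)) * ln b +
  (psumR (fun m => beta m * ln (INR m)) (floor_nat b) - L).
Proof.
  intros Hb HKn. pose proof (floor_nat_spec b ltac:(lra)) as [F1 F2].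
  set (n := floor_nat b) in *.
  set (w := fun m => if Rle_dec (INR m) X then ln X - ln (INR m) else 0).
  assert (E1 : psumR (fun m => beta m * step_log X b (INR m)) n =
     ln b * psumR beta n - psumR (fun m => beta m * ln (INR m)) n -
     psumR (fun m => beta m * w m) n).
  { replace (ln b * psumR beta n - psumR (fun m => beta m * ln (INR m)) n -
             psumR (fun m => beta m * w m) n)
      with (psumR (fun m => ln b * beta m + (-1) * (beta m * ln (INR m)) +
                            (-1) * (beta m * w m)) n)
      by (rewrite !psumR_plus, !psumR_scal; ring).
    apply psumR_ext. intros k Hk. unfold step_log, w.
    assert (INR k <= INR n) by (apply le_INR; lia).
    destruct (Rle_dec (INR k) X); [ring|]. destruct (Rle_dec (INR k) b); [ring | lra]. }
  assert (E2 : psumR (fun m => beta m * w m) n = psumR (fun m => beta m * w m) K).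
  { replace n with (K + (n - K))%nat by lia. apply psumR_pad.
    intros k Hk. unfold w. destruct (Rle_dec (INR k) X) as [C|]; [|ring].
    exfalso. assert (INR K + 1 <= INR k) by (rewrite <- S_INR; apply le_INR; lia). lra. }
  unfold tail_primitive, tail_integral. fold n. rewrite E1, E2. unfold w. ring.
Qed.

Lemma tail_primitive_lim : filterlim tail_primitive (Rbar_locally p_infty) (locally tail_integral).
Proof.
  apply filterlim_locally. intros eps.
  pose proof (abel_lim beta s L Hs HL) as A. apply is_lim_seq_spec in A.
  pose proof HL as B. apply is_lim_seq_spec in B.
  assert (He : 0 < eps / 2) by (destruct eps; simpl; lra).
  destruct (A (mkposreal _ He)) as [N1 HN1]. destruct (B (mkposreal _ He)) as [N2 HN2].
  simpl in HN1, HN2.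
  exists (INR (N1 + N2 + K) + X + 1). intros b Hb.
  pose proof (pos_INR (N1 + N2 + K)).
  pose proof (floor_nat_spec b ltac:(lra)) as [F1 F2].
  assert (Hn : (N1 + N2 + K <= floor_nat b)%nat) by (apply INR_le; lra).
  change (Rabs (tail_primitive b - tail_integral) < eps).
  rewrite tail_primitive_gap by (lra || lia).
  specialize (HN1 (floor_nat b) ltac:(lia)). specialize (HN2 (floor_nat b) ltac:(lia)).
  rewrite Rminus_0_r in HN1.
  assert (Hlb : 0 < ln b) by (apply ln_pos_gt1; lra).
  assert (Hlb2 : ln b <= ln (INR (floor_nat b) + 1)) by (apply ln_le; lra).
  assert (Rabs ((s - psumR beta (floor_nat b)) * ln b) <=
          Rabs ((s - psumR beta (floor_nat b)) * ln (INR (floor_nat b) + 1))).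
  { rewrite !Rabs_mult. apply Rmult_le_compat_l; [apply Rabs_pos|]. rewrite !Rabs_right; lra. }
  eapply Rle_lt_trans; [apply Rabs_triang|]. destruct eps; simpl in *; lra.
Qed.
End TailIntegral.

Lemma Gsharp_integral (g : nat -> C) (s Lg : C) (X : R) (K : nat) :
  0 < X -> X < INR K + 1 ->
  @is_series C_AbsRing C_NormedModule (fun k => alpha g (S k)) s ->
  @is_series C_AbsRing C_NormedModule
    (fun k => alpha g (S k) * RtoC (ln (INR (S k))))%C Lg ->
  is_RInt_gen (fun t => (Gsharp g t / RtoC t)%C) (at_point X) (Rbar_locally p_infty)
    (Lg - s * RtoC (ln X) + psumC (fun m => alpha g m *
       RtoC (if Rle_dec (INR m) X then ln X - ln (INR m) else 0)) K)%C.
Proof.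
  intros HX HK HS HL.
  destruct (is_series_C_parts _ _ HS) as [HSr HSi].
  destruct (is_series_C_parts (fun m => alpha g m * RtoC (ln (INR m)))%C _ HL) as [HLr HLi].
  set (br := fun m => Re (alpha g m)). set (bi := fun m => Im (alpha g m)).
  assert (HLr' : is_lim_seq (psumR (fun m => br m * ln (INR m))) (Re Lg)).
  { eapply is_lim_seq_ext; [|exact HLr]. intros n. apply psumR_ext. intros k _. apply re_scal_r. }
  assert (HLi' : is_lim_seq (psumR (fun m => bi m * ln (INR m))) (Im Lg)).
  { eapply is_lim_seq_ext; [|exact HLi]. intros n. apply psumR_ext. intros k _. apply im_scal_r. }
  replace (Lg - s * RtoC (ln X) + _)%C with
    (tail_integral br (Re s) (Re Lg) X K, tail_integral bi (Im s) (Im Lg) X K).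
  2:{ unfold Cminus, tail_integral. apply injective_projections; cbn [fst snd].
      - change (fst ?z) with (Re z). rewrite !re_plus, re_opp, re_scal_r, Re_psumC.
        symmetry. erewrite psumR_ext by (intros k _; apply re_scal_r). unfold br. ring.
      - change (snd ?z) with (Im z). rewrite !im_plus, im_opp, im_scal_r, Im_psumC.
        symmetry. erewrite psumR_ext by (intros k _; apply im_scal_r). unfold bi. ring. }
  apply is_RInt_gen_from_primitive with
    (J := fun b => (tail_primitive br (Re s) X b, tail_primitive bi (Im s) X b)).
  - intros b Hb. apply is_RInt_fct_extend_pair; cbn [fst snd].
    + apply is_RInt_ext with (fun t => Re (Gsharp g t) / t).
      * intros t Ht. rewrite Rmin_left, Rmax_right in Ht by lra.
        unfold Cdiv. rewrite <- RtoC_inv by lra. symmetry. apply re_scal_r.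
      * apply tail_primitive_correct; [exact HX | | exact Hb].
        intros t N Ht. apply (Gsharp_parts g s t N HS Ht).
    + apply is_RInt_ext with (fun t => Im (Gsharp g t) / t).
      * intros t Ht. rewrite Rmin_left, Rmax_right in Ht by lra.
        unfold Cdiv. rewrite <- RtoC_inv by lra. symmetry. apply im_scal_r.
      * apply tail_primitive_correct; [exact HX | | exact Hb].
        intros t N Ht. apply (Gsharp_parts g s t N HS Ht).
  - apply filterlim_pair_locally; simpl; apply tail_primitive_lim; assumption.
Qed.

(** * The error term

    Write X = e^gamma D.  The error is sum_{m <= X} alpha(m) e_m with
    e_m = H(D/m) - gamma - ln(D/m).  For m <= D the estimate on H gives
    |e_m| <= gamma m / D; for D < m <= X we have H(D/m) = 0 and
    |e_m| = gamma - ln(m/D).  In both cases |e_m| / m <= w(m) / D, where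
    w(m) = int_1^{e^gamma} 1_{m <= u D} du/u, and sum_m |g(m)| w(m) is the
    integral in the statement. *)

Definition error_weight (D : R) (m : nat) : R := step_log 1 (exp euler_gamma) (INR m / D).

Lemma error_integral (g : nat -> C) (D : R) (K : nat) : 1 <= D ->
  (Z.to_nat (up (exp euler_gamma * D)) <= K)%nat ->
  RInt (fun u => sumR_le (fun m => Cmod (g m)) (u * D) / u) 1 (exp euler_gamma) =
  psumR (fun m => Cmod (g m) * error_weight D m) K.
Proof.
  intros HD HK. pose proof exp_euler_gamma_ge1.
  apply is_RInt_unique.
  apply is_RInt_ext with
    (fun u => psumR (fun m => Cmod (g m) * (if Rle_dec (INR m / D) u then / u else 0)) K).
  - intros u Hu. rewrite Rmin_left, Rmax_right in Hu by lra.
    rewrite (sumR_le_psumR _ _ K).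
    2:{ apply Nat.le_trans with (2 := HK), up_mono, Rmult_le_compat_r; lra. }
    match goal with |- _ = ?p / u => replace (p / u) with (/ u * p) by (unfold Rdiv; ring) end.
    rewrite <- psumR_scal. apply psumR_ext. intros m _.
    pose proof (Rle_div_l (INR m) u D ltac:(lra)).
    destruct (Rle_dec (INR m) (u * D)), (Rle_dec (INR m / D) u); try tauto; ring.
  - apply is_RInt_psumR. intros m _. apply (is_RInt_scal (V := R_NormedModule)).
    apply is_RInt_step_inv; lra.
Qed.

Lemma error_term_near (D : R) (m : nat) : (1 <= m)%nat -> INR m <= D ->
  / INR m * Rabs (harm (D / INR m) - euler_gamma - ln (D / INR m)) <= / D * euler_gamma.
Proof.
  intros Hm HmD. assert (HmR : 1 <= INR m) by (apply (le_INR 1); lia).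
  assert (Hy : 1 <= D / INR m) by (apply Rle_div_r; lra).
  pose proof (harm_estimate _ Hy) as B.
  replace (harm (D / INR m) - ln (D / INR m) - euler_gamma)
    with (harm (D / INR m) - euler_gamma - ln (D / INR m)) in B by ring.
  replace (euler_gamma / (D / INR m)) with (INR m * (/ D * euler_gamma)) in B by (field; lra).
  apply Rmult_le_reg_l with (INR m); [lra|].
  rewrite <- Rmult_assoc, Rinv_r, Rmult_1_l by lra. exact B.
Qed.

Lemma error_term_far (D : R) (m : nat) : 1 <= D -> D < INR m ->
  INR m / D <= exp euler_gamma ->
  / INR m * Rabs (harm (D / INR m) - euler_gamma - ln (D / INR m)) <=
  / D * (euler_gamma - ln (INR m / D)).
Proof.
  intros HD HDm Hfar.
  rewrite harm_small.
  2:{ split; [apply Rlt_le, Rdiv_lt_0_compat | apply Rlt_div_l]; lra. }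
  replace (ln (D / INR m)) with (- ln (INR m / D)) by (rewrite !ln_div by lra; ring).
  assert (ln (INR m / D) <= euler_gamma).
  { rewrite <- (ln_exp euler_gamma). apply ln_le; [apply Rdiv_lt_0_compat|]; lra. }
  rewrite Rabs_left1 by lra.
  replace (- (0 - euler_gamma - - ln (INR m / D))) with (euler_gamma - ln (INR m / D)) by ring.
  apply Rmult_le_compat_r; [lra|]. apply Rinv_le_contravar; lra.
Qed.

Lemma error_term_bound (D : R) (m : nat) : 1 <= D -> (1 <= m)%nat ->
  / INR m * Rabs (if Rle_dec (INR m) (exp euler_gamma * D)
                  then harm (D / INR m) - euler_gamma - ln (D / INR m) else 0)
  <= / D * error_weight D m.
Proof.
  intros HD Hm. pose proof euler_gamma_ge.
  assert (HiD : 0 < / D) by (apply Rinv_0_lt_compat; lra).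
  unfold error_weight, step_log. rewrite ln_exp, ln_1, Rminus_0_r.
  assert (E1 : INR m / D <= 1 <-> INR m <= D) by (rewrite Rle_div_l, Rmult_1_l; lra).
  assert (E2 : INR m / D <= exp euler_gamma <-> INR m <= exp euler_gamma * D)
    by (rewrite Rle_div_l; lra).
  destruct (Rle_dec (INR m) (exp euler_gamma * D)),
    (Rle_dec (INR m / D) 1), (Rle_dec (INR m / D) (exp euler_gamma)); try tauto.
  - apply error_term_near; tauto.
  - apply error_term_far; [lra | apply Rnot_le_lt; tauto | assumption].
  all: rewrite Rabs_R0, Rmult_0_r; nra.
Qed.

Lemma error_sum_bound (g : nat -> C) (D : R) (K : nat) : 1 <= D ->
  Cmod (psumC (fun m => alpha g m * RtoC (if Rle_dec (INR m) (exp euler_gamma * D)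
          then harm (D / INR m) - euler_gamma - ln (D / INR m) else 0))%C K)
  <= / D * psumR (fun m => Cmod (g m) * error_weight D m) K.
Proof.
  intros HD. eapply Rle_trans; [apply Cmod_psumC_le|].
  rewrite <- psumR_scal. apply psumR_le. intros m Hm.
  assert (0 < INR m) by (apply lt_0_INR; lia).
  unfold alpha. rewrite Cmod_mult, Cmod_div, !Cmod_R, (Rabs_right (INR m))
    by (try apply RtoC_neq0; lra).
  pose proof (error_term_bound D m HD ltac:(lia)). pose proof (Cmod_ge_0 (g m)).
  replace (/ D * (Cmod (g m) * error_weight D m))
    with (Cmod (g m) * (/ D * error_weight D m)) by ring.
  unfold Rdiv. rewrite Rmult_assoc. apply Rmult_le_compat_l; assumption.
Qed.

(** The main term, the integral and the divisor sum combine into the error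
    sum: with ln X = gamma + ln D, the terms with m > X vanish since then
    D / m < 1. *)
Lemma error_identity (g : nat -> C) (s Lg : C) (D : R) (K : nat) : 1 <= D ->
  let X := exp euler_gamma * D in
  (psumC (fun m => alpha g m * RtoC (harm (D / INR m))) K
   - (RtoC (ln D + euler_gamma) * s - Lg)
   - (Lg - s * RtoC (ln X) + psumC (fun m => alpha g m *
        RtoC (if Rle_dec (INR m) X then ln X - ln (INR m) else 0)) K))%C
  = psumC (fun m => alpha g m * RtoC (if Rle_dec (INR m) X
          then harm (D / INR m) - euler_gamma - ln (D / INR m) else 0))%C K.
Proof.
  intros HD X.
  assert (HX : D <= X) by (unfold X; pose proof exp_euler_gamma_ge1; nra).
  assert (HlnX : ln X = euler_gamma + ln D).
  { unfold X. rewrite ln_mult, ln_exp by (try apply exp_pos; lra). reflexivity. }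
  rewrite HlnX.
  transitivity (psumC (fun m => alpha g m * RtoC (harm (D / INR m))) K +
    - RtoC 1 * psumC (fun m => alpha g m *
      RtoC (if Rle_dec (INR m) X then euler_gamma + ln D - ln (INR m) else 0)) K)%C.
  { rewrite !RtoC_plus. ring. }
  rewrite <- psumC_scal, <- psumC_plus. apply psumC_ext. intros m Hm.
  assert (0 < INR m) by (apply lt_0_INR; lia).
  rewrite ln_div by lra.
  destruct (Rle_dec (INR m) X) as [HmX|HmX].
  - rewrite !RtoC_minus, !RtoC_plus. ring.
  - rewrite harm_small.
    + ring.
    + split; [apply Rlt_le, Rdiv_lt_0_compat; lra|].
      apply Rmult_lt_reg_r with (INR m); [lra|].
      replace (D / INR m * INR m) with D by (field; lra). lra.
Qed.

Lemma is_series_log_alpha (g : nat -> C) (Lg : C) :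
  @is_series C_AbsRing C_NormedModule
    (fun k => g (S k) * RtoC (ln (INR (S k))) / RtoC (INR (S k)))%C Lg ->
  @is_series C_AbsRing C_NormedModule
    (fun k => alpha g (S k) * RtoC (ln (INR (S k))))%C Lg.
Proof.
  apply is_series_ext. intros k. unfold alpha.
  assert (0 < INR (S k)) by (apply lt_0_INR; lia).
  change (@eq C (g (S k) * RtoC (ln (INR (S k))) / RtoC (INR (S k)))%C
                (g (S k) / RtoC (INR (S k)) * RtoC (ln (INR (S k))))%C).
  field. apply RtoC_neq0. lra.
Qed.

Lemma main_term_series (g : nat -> C) (s Lg : C) (D : R) : 0 < D ->
  @is_series C_AbsRing C_NormedModule (fun k => alpha g (S k)) s ->
  @is_series C_AbsRing C_NormedModule
    (fun k => alpha g (S k) * RtoC (ln (INR (S k))))%C Lg ->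
  @is_series C_AbsRing C_NormedModule
    (fun k => g (S k) / RtoC (INR (S k)) * RtoC (ln (D / INR (S k)) + euler_gamma))%C
    (RtoC (ln D + euler_gamma) * s - Lg)%C.
Proof.
  intros HD HS HL.
  pose proof (is_series_minus _ _ _ _ (is_series_scal (RtoC (ln D + euler_gamma)) _ _ HS) HL)
    as H.
  eapply is_series_ext; [|exact H]. intros k. cbn -[INR alpha].
  assert (0 < INR (S k)) by (apply lt_0_INR; lia).
  change (plus ?a (opp ?b)) with (a - b)%C. change (scal ?c ?z) with (c * z)%C.
  rewrite ln_div, !RtoC_plus, RtoC_minus by lra. unfold alpha. ring.
Qed.

Theorem mainTheorem11 (g : nat -> C)
  (Hconv1 : ex_series (fun k : nat => (g (S k) / RtoC (INR (S k)))%C))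
  (Hconv2 : ex_series (fun k : nat =>
              (g (S k) * RtoC (ln (INR (S k))) / RtoC (INR (S k)))%C))
  (Hint : ex_RInt_gen (fun t : R => (Cmod (Gsharp g t) / t)%R)
            (at_point 1%R) (Rbar_locally p_infty))
  (D : R) (HD : (1 <= D)%R) :
  exists (Ssum I : C),
    is_series (fun k : nat =>
      (g (S k) / RtoC (INR (S k)) *
       RtoC (ln (D / INR (S k)) + euler_gamma))%C) Ssum /\
    is_RInt_gen (fun t : R => (Gsharp g t / RtoC t)%C)
      (at_point (exp euler_gamma * D)%R) (Rbar_locally p_infty) I /\
    (Cmod (sumC_le (fun n => (conv1 g n / RtoC (INR n))%C) D - Ssum - I)
     <= / D * RInt (fun u : R => (sumR_le (fun m => Cmod (g m)) (u * D) / u)%R)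
                   1 (exp euler_gamma))%R.
Proof.
  destruct Hconv1 as [s HS]. destruct Hconv2 as [Lg HL].
  apply is_series_log_alpha in HL.
  set (X := exp euler_gamma * D).
  assert (HDX : D <= X) by (unfold X; pose proof exp_euler_gamma_ge1; nra).
  set (K := Z.to_nat (up X)).
  assert (HK : X < INR K + 1) by (pose proof (up_nat_gt X ltac:(lra)); unfold K; lra).
  exists (RtoC (ln D + euler_gamma) * s - Lg)%C.
  exists (Lg - s * RtoC (ln X) + psumC (fun m => alpha g m *
            RtoC (if Rle_dec (INR m) X then ln X - ln (INR m) else 0)) K)%C.
  split; [|split].
  - apply main_term_series; [lra | exact HS | exact HL].
  - apply Gsharp_integral; [lra | exact HK | exact HS | exact HL].
  - rewrite (divisor_sum_swap g D K) by (try apply up_mono; lra).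
    unfold X. rewrite (error_identity g s Lg D K HD).
    rewrite (error_integral g D K HD (Nat.le_refl K)).
    apply error_sum_bound, HD.
Qed.
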